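(* Let $S$ be a semigroup and let $a_1,a_2,\dotsc$ be a sequence in $S$. If the set $\mathrm{FS}(a_1,a_2,\dotsc)$ is infinite, then it is a proper IP set; in particular, every superset of such a set is a proper IP set.
   Context: Semigroups are written additively but are not assumed commutative. For a sequence $a_1,a_2,\dotsc$ in a semigroup, $\mathrm{FS}(a_1,a_2,\dotsc):=\{a_{i_1}+\dotsb+a_{i_m} : m\ge 1,\ i_1<\dotsb<i_m\}$, and for a natural number $n$, $\mathrm{FS}(a_1,\dotsc,a_n):=\{a_{i_1}+\dotsb+a_{i_m} : m\ge1,\ i_1<\dotsb<i_m\le n\}$. A subset of a semigroup is a proper IP set if it contains $\mathrm{FS}(b_1,b_2,\dotsc)$ for some bijective (i.e. injective) sequence $b_1,b_2,\dotsc$ in the semigroup. *)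

From Stdlib Require Import List Arith.
Import ListNotations.

(* A semigroup is represented by a carrier S with a binary operation op
   (written additively in the paper, not assumed commutative); associativity
   is an explicit hypothesis of the theorem. *)

Fixpoint incr_from (i : nat) (l : list nat) : Prop :=
  match l with
  | [] => True
  | j :: l' => i < j /\ incr_from j l'
  end.

(* The sum a_{i0} + a_{i1} + ... + a_{ik} (left-nested; by associativity the
   bracketing is irrelevant), with indices in the given order. *)
Definition seq_sum {S : Type} (op : S -> S -> S) (a : nat -> S)
  (i0 : nat) (l : list nat) : S :=
  fold_left (fun acc i => op acc (a i)) l (a i0).

(* FS(a_1, a_2, ...): all finite sums a_{i_1} + ... + a_{i_m}, m >= 1,
   i_1 < ... < i_m.  (Sequences are indexed from 0 here.) *)
Definition FS {S : Type} (op : S -> S -> S) (a : nat -> S) (x : S) : Prop :=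
  exists (i0 : nat) (l : list nat), incr_from i0 l /\ x = seq_sum op a i0 l.

Definition finite_set {S : Type} (A : S -> Prop) : Prop :=
  exists l : list S, forall x, A x -> In x l.

Definition proper_IP {S : Type} (op : S -> S -> S) (A : S -> Prop) : Prop :=
  exists b : nat -> S, (forall m n, b m = b n -> m = n) /\
    (forall x, FS op b x -> A x).

From Stdlib Require Import List Arith Lia Classical ClassicalEpsilon.
Import ListNotations.

(* Every tail FS(a_m, a_{m+1}, ...) of an infinite FS(a) is infinite, because
   FS(a_m, ...) is covered by a_m, FS(a_{m+1}, ...) and a_m + FS(a_{m+1}, ...).
   So one can choose, greedily, finite sums b_0, b_1, ... of a over
   consecutive blocks of indices, each block lying beyond the previous one and
   each b_n distinct from b_0, ..., b_{n-1}.  Then b is injective, and a sum of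
   b over increasing indices is the sum of a over the concatenated blocks, so
   FS(b) is contained in FS(a). *)

Fixpoint last_index (i : nat) (l : list nat) : nat :=
  match l with [] => i | j :: l' => last_index j l' end.

Lemma last_index_ge l i : incr_from i l -> i <= last_index i l.
Proof.
  revert i; induction l as [|j l IH]; simpl; intros i H; [lia|].
  destruct H as [Hij Hl]; specialize (IH j Hl); lia.
Qed.

Lemma incr_from_app l1 i j l2 :
  incr_from i l1 -> last_index i l1 < j -> incr_from j l2 ->
  incr_from i (l1 ++ j :: l2).
Proof.
  revert i; induction l1 as [|k l1 IH]; simpl; intros i H1 H2 H3; [tauto|].
  destruct H1; split; auto.
Qed.

Section Sums.

Variables (S : Type) (op : S -> S -> S).
Hypothesis op_assoc : forall x y z, op x (op y z) = op (op x y) z.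
Variable a : nat -> S.

Lemma fold_sum_op_l l x y :
  fold_left (fun acc i => op acc (a i)) l (op x y)
  = op x (fold_left (fun acc i => op acc (a i)) l y).
Proof.
  revert y; induction l as [|j l IH]; intro y; simpl; [reflexivity|].
  rewrite <- op_assoc; apply IH.
Qed.

Lemma seq_sum_cons i j l : seq_sum op a i (j :: l) = op (a i) (seq_sum op a j l).
Proof. apply fold_sum_op_l. Qed.

Lemma seq_sum_app i l1 j l2 :
  seq_sum op a i (l1 ++ j :: l2) = op (seq_sum op a i l1) (seq_sum op a j l2).
Proof. unfold seq_sum; rewrite fold_left_app; apply fold_sum_op_l. Qed.

Definition tail_FS (m : nat) (x : S) : Prop :=
  exists i0 l, m <= i0 /\ incr_from i0 l /\ x = seq_sum op a i0 l.

Lemma tail_FS_finite_pred m :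
  finite_set (tail_FS (Datatypes.S m)) -> finite_set (tail_FS m).
Proof.
  intros [L HL]; exists (a m :: L ++ map (op (a m)) L).
  intros x (i0 & l & Hm & Hl & ->).
  destruct (Nat.eq_dec i0 m) as [->|Hne].
  - destruct l as [|j l]; [now left|].
    right; apply in_or_app; right; rewrite seq_sum_cons; apply in_map, HL.
    destruct Hl; exists j, l; repeat split; auto; lia.
  - right; apply in_or_app; left; apply HL.
    exists i0, l; repeat split; auto; lia.
Qed.

Lemma FS_finite_of_tail_FS_finite m :
  finite_set (tail_FS m) -> finite_set (FS op a).
Proof.
  induction m as [|m IH]; intro Hfin.
  - destruct Hfin as [L HL]; exists L.
    intros x (i0 & l & Hl & ->); apply HL; exists i0, l; repeat split; auto; lia.
  - apply IH, tail_FS_finite_pred, Hfin.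
Qed.

Lemma tail_sum_not_in :
  ~ finite_set (FS op a) -> forall m (L : list S),
  exists p : nat * list nat, m <= fst p /\ incr_from (fst p) (snd p) /\
    ~ In (seq_sum op a (fst p) (snd p)) L.
Proof.
  intros Hinf m L; apply NNPP; intro Hall.
  apply Hinf, (FS_finite_of_tail_FS_finite m); exists L.
  intros x (i0 & l & Hm & Hl & ->); apply NNPP; intro Hnot.
  apply Hall; exists (i0, l); auto.
Qed.

End Sums.

Section Blocks.

Variables (S : Type) (op : S -> S -> S).
Hypothesis op_assoc : forall x y z, op x (op y z) = op (op x y) z.
Variable a : nat -> S.

Variable pick : nat -> list S -> nat * list nat.
Hypothesis pick_spec : forall m L,
  m <= fst (pick m L) /\ incr_from (fst (pick m L)) (snd (pick m L)) /\
  ~ In (seq_sum op a (fst (pick m L)) (snd (pick m L))) L.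

Definition block_sum (p : nat * list nat) : S := seq_sum op a (fst p) (snd p).

(* After n steps: the first index still free, and the sums b_{n-1}, ..., b_0. *)
Fixpoint state (n : nat) : nat * list S :=
  match n with
  | 0 => (0, [])
  | Datatypes.S n =>
      let p := pick (fst (state n)) (snd (state n)) in
      (Datatypes.S (last_index (fst p) (snd p)), block_sum p :: snd (state n))
  end.

Definition block (n : nat) : nat * list nat := pick (fst (state n)) (snd (state n)).

Definition b (n : nat) : S := block_sum (block n).

Lemma block_end_lt_state n :
  last_index (fst (block n)) (snd (block n)) < fst (state (Datatypes.S n)).
Proof. apply Nat.lt_succ_diag_r. Qed.

Lemma state_le_block n : fst (state n) <= fst (block n).
Proof. apply pick_spec. Qed.

Lemma incr_block n : incr_from (fst (block n)) (snd (block n)).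
Proof. apply pick_spec. Qed.

Lemma state_mono n k : n <= k -> fst (state n) <= fst (state k).
Proof.
  induction 1 as [|k _ IH]; [lia|].
  pose proof (last_index_ge _ _ (incr_block k)).
  pose proof (state_le_block k); pose proof (block_end_lt_state k); lia.
Qed.

Lemma b_in_state k n : k < n -> In (b k) (snd (state n)).
Proof.
  induction n as [|n IH]; intro Hk; [lia|].
  destruct (Nat.eq_dec k n) as [->|Hne]; [now left|].
  right; apply IH; lia.
Qed.

Lemma b_injective m n : b m = b n -> m = n.
Proof.
  assert (Hfresh : forall k n, k < n -> b k <> b n).
  { intros k n' Hk E.
    apply (proj2 (proj2 (pick_spec (fst (state n')) (snd (state n'))))).
    change (In (b n') (snd (state n'))); rewrite <- E; now apply b_in_state. }
  intro E; destruct (lt_eq_lt_dec m n) as [[Hlt|Heq]|Hlt]; auto.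
  - now destruct (Hfresh _ _ Hlt).
  - now destruct (Hfresh _ _ Hlt).
Qed.

Lemma seq_sum_b_as_tail_sum l j0 : incr_from j0 l ->
  exists i0 li, fst (state j0) <= i0 /\ incr_from i0 li /\
    seq_sum op a i0 li = seq_sum op b j0 l.
Proof.
  revert j0; induction l as [|j1 l IH]; intros j0 Hl.
  - exists (fst (block j0)), (snd (block j0)).
    split; [apply state_le_block|split; [apply incr_block|reflexivity]].
  - destruct Hl as [Hlt Hl].
    destruct (IH j1 Hl) as (i1 & l1 & Hi1 & Hl1 & E).
    exists (fst (block j0)), (snd (block j0) ++ i1 :: l1).
    split; [apply state_le_block|split].
    + apply incr_from_app; [apply incr_block| |exact Hl1].
      pose proof (block_end_lt_state j0); pose proof (state_mono _ _ Hlt); lia.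
    + rewrite seq_sum_app, seq_sum_cons, E by exact op_assoc; reflexivity.
Qed.

Lemma FS_b_sub x : FS op b x -> FS op a x.
Proof.
  intros (j0 & l & Hl & ->).
  destruct (seq_sum_b_as_tail_sum l j0 Hl) as (i0 & li & _ & Hli & E).
  exists i0, li; auto.
Qed.

End Blocks.

Theorem lemma1p3 (S : Type) (op : S -> S -> S)
  (op_assoc : forall x y z, op x (op y z) = op (op x y) z)
  (a : nat -> S) :
  ~ finite_set (FS op a) ->
  proper_IP op (FS op a) /\
  (forall B : S -> Prop, (forall x, FS op a x -> B x) -> proper_IP op B).
Proof.
  intro Hinf.
  pose (choose m L := constructive_indefinite_description _
                        (tail_sum_not_in S op op_assoc a Hinf m L)).
  pose (pick m L := proj1_sig (choose m L)).
  assert (Hpick : forall m L, m <= fst (pick m L) /\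
            incr_from (fst (pick m L)) (snd (pick m L)) /\
            ~ In (seq_sum op a (fst (pick m L)) (snd (pick m L))) L)
    by (intros m L; exact (proj2_sig (choose m L))).
  assert (HIP : proper_IP op (FS op a)).
  { exists (b S op a pick); split.
    - apply (b_injective S op a pick Hpick).
    - apply (FS_b_sub S op op_assoc a pick Hpick). }
  split; [exact HIP|].
  intros B HB; destruct HIP as (c & Hc & Hsub); exists c; split; auto.
Qed.
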